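(* The set $\mathcal{I}_{\mathrm{str}}(\Omega_1)$ has the cardinality of the continuum.
   Context: Let $\mathbf{2}=\{0,1\}$. A partial function of arity $n$ on $\mathbf{2}$ is a map $f:\operatorname{dom} f\to\mathbf{2}$ with $\operatorname{dom} f\subseteq \mathbf{2}^n$; it is total if $\operatorname{dom} f=\mathbf{2}^n$. $P_{\mathbf{2}}$ is the set of all partial functions, $O_{\mathbf{2}}$ the set of total ones. Composition $F=f(g_1,\dots,g_n)$ is given by $F(\mathbf{x})=f(g_1(\mathbf{x}),\dots,g_n(\mathbf{x}))$ on $\operatorname{dom} F=\{\mathbf{x}\in\bigcap_i\operatorname{dom} g_i : (g_1(\mathbf{x}),\dots,g_n(\mathbf{x}))\in\operatorname{dom} f\}$. A partial clone is a composition-closed subset of $P_{\mathbf{2}}$ containing all projections; a total clone is one contained in $O_{\mathbf{2}}$. A partial clone $X$ is strong if it contains every restriction of each of its members. For a total clone $C$, $\mathcal{I}_{\mathrm{str}}(C)$ is the set of all strong partial clones $X$ with $X\cap O_{\mathbf{2}}=C$. $\Omega_1$ is the total clone generated by all unary total Boolean functions. *)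

From mathcomp Require Import all_boot.
From mathcomp Require Import boolp classical_sets cardinality.
Set Implicit Arguments. Unset Strict Implicit. Unset Printing Implicit Defensive.

(* Body of a partial Boolean function of arity n : 2^n -> 2 ∪ {undefined}.
   [f x = None] means x ∉ dom f. *)
Definition ppfun (n : nat) := {ffun {ffun 'I_n -> bool} -> option bool}.

Definition pfun := {k : nat & ppfun k.+1}.

Definition mkpf (k : nat) (f : ppfun k.+1) : pfun := existT _ k f.

Definition total (f : pfun) : Prop := forall x, projT2 f x <> None.

Definition proj (n : nat) (i : 'I_n) : ppfun n := [ffun x : {ffun 'I_n -> bool} => Some (x i)].

Definition comp (m n : nat) (f : ppfun n) (gs : 'I_n -> ppfun m) : ppfun m :=
  [ffun x : {ffun 'I_m -> bool} => if [forall i, gs i x != None]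
             then f [ffun i => odflt false (gs i x)] else None].

Definition partial_clone (X : set pfun) : Prop :=
  (forall k (i : 'I_k.+1), X (mkpf (proj i))) /\
  (forall m n (f : ppfun n.+1) (gs : 'I_n.+1 -> ppfun m.+1),
      X (mkpf f) -> (forall i, X (mkpf (gs i))) -> X (mkpf (comp f gs))).

Definition total_clone (C : set pfun) : Prop :=
  partial_clone C /\ (forall f, C f -> total f).

Definition restriction_of k (g f : ppfun k.+1) : Prop :=
  forall x, g x <> None -> g x = f x.

Definition strong_partial_clone (X : set pfun) : Prop :=
  partial_clone X /\
  (forall k (f g : ppfun k.+1), X (mkpf f) -> restriction_of g f -> X (mkpf g)).

Definition I_str (C : set pfun) : set (set pfun) :=
  [set X | strong_partial_clone X /\ (forall f, (X f /\ total f) <-> C f)].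

Definition unary_total (f : pfun) : Prop := projT1 f = 0%N /\ total f.

Definition Omega1 : set pfun :=
  [set f | forall C, total_clone C -> (forall u, unary_total u -> C u) -> C f].

From Pilot Require Import Defs.
From mathcomp Require Import all_boot zify.
From mathcomp Require Import boolp classical_sets cardinality.
Set Implicit Arguments. Unset Strict Implicit. Unset Printing Implicit Defensive.

(* For S ⊆ ℕ let X_S be the set of partial functions preserving the 4-ary
   relation ρ = {t | t0 = t1 ∨ t2 = t3} and, for each p ∈ S, the q-ary relation
   σ_q (q = p + 7) of tuples whose weight lies in {0, 2, q - 2, q}.  A set of
   partial polymorphisms is always a strong partial clone.  Both relations are
   invariant under coordinatewise unary maps, so X_S contains Ω_1, and a total
   function preserving ρ depends on at most one variable, so X_S has no other
   total members.  X_S determines S: the partial function g_M defined on the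
   M stars of the complete graph K_M (incidence vectors of the edges at a
   vertex x), with value [x < 3], preserves ρ and every σ_q with 7 <= q <> M,
   but not σ_M.  So S ↦ X_S embeds P(ℕ) into I_str(Ω_1), which in turn embeds
   into P(ℕ) because P_2 is countable. *)

Section Polymorphisms.

Variables (h : nat) (R : {ffun 'I_h -> bool} -> Prop).

(* The rows [M i] of the h × n matrix [M] are arguments of [f]; its columns
   are tuples of [R]. *)
Definition preserves n (f : ppfun n) :=
  forall M : 'I_h -> {ffun 'I_n -> bool},
    (forall j : 'I_n, R [ffun i => M i j]) ->
    (forall i, f (M i) <> None) ->
    R [ffun i => odflt false (f (M i))].

Lemma preserves_proj n (i : 'I_n) : preserves (Defs.proj i).
Proof.
move=> M RM _.
have -> : [ffun j => odflt false (Defs.proj i (M j))] = [ffun j => M j i].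
  by apply/ffunP=> j; rewrite !ffunE.
exact: RM.
Qed.

Lemma preserves_comp m n (f : ppfun n) (gs : 'I_n -> ppfun m) :
  preserves f -> (forall i, preserves (gs i)) -> preserves (Defs.comp f gs).
Proof.
move=> Rf Rgs M RM domM.
have gs_def a : [forall i, gs i (M a) != None].
  by move: (domM a); rewrite ffunE; case: ifP.
pose N a := [ffun i => odflt false (gs i (M a))].
have compE a : Defs.comp f gs (M a) = f (N a) by rewrite ffunE gs_def.
have -> : [ffun a => odflt false (Defs.comp f gs (M a))] =
          [ffun a => odflt false (f (N a))].
  by apply/ffunP=> a; rewrite [LHS]ffunE [RHS]ffunE compE.
apply: Rf => [i|a]; last by rewrite -compE.
have -> : [ffun a => N a i] = [ffun a => odflt false (gs i (M a))].
  by apply/ffunP=> a; rewrite !ffunE.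
by apply: Rgs => // a; move/forallP/(_ i)/eqP: (gs_def a).
Qed.

Lemma preserves_restriction k (f g : ppfun k.+1) :
  restriction_of g f -> preserves f -> preserves g.
Proof.
move=> gf Rf M RM domM.
have gfM a : g (M a) = f (M a) by apply/gf/domM.
have -> : [ffun a => odflt false (g (M a))] = [ffun a => odflt false (f (M a))].
  by apply/ffunP=> a; rewrite !ffunE gfM.
by apply: Rf => // a; rewrite -gfM.
Qed.

Definition unary_invariant :=
  forall t (c : bool -> bool), R t -> R [ffun i => c (t i)].

Lemma preserves_total_unary (u : ppfun 1) :
  unary_invariant -> Defs.total (mkpf u) -> preserves u.
Proof.
move=> Rc _ M RM _.
pose c b := odflt false (u [ffun _ => b]).
have -> : [ffun i => odflt false (u (M i))] = [ffun i => c ([ffun i => M i ord0] i)].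
  apply/ffunP=> i; rewrite !ffunE /c; congr (odflt false (u _)).
  by apply/ffunP=> j; rewrite ffunE (ord1 j).
exact/Rc/RM.
Qed.

End Polymorphisms.

Definition rho (t : {ffun 'I_4 -> bool}) : Prop :=
  t (inord 0) = t (inord 1) \/ t (inord 2) = t (inord 3).

Definition sigma_weight (q w : nat) : Prop :=
  w = 0 \/ w = 2 \/ w = q - 2 \/ w = q.

Definition sigma q (t : {ffun 'I_q -> bool}) : Prop :=
  sigma_weight q #|[set i | t i]|.
Arguments sigma : clear implicits.

Lemma rho_unary_invariant : unary_invariant rho.
Proof. by move=> t c; rewrite /rho !ffunE => -[->|->]; [left|right]. Qed.

Lemma sigma_unary_invariant q : unary_invariant (sigma q).
Proof.
move=> t c; rewrite /sigma /sigma_weight.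
have wt_le : #|[set i | t i]| <= q by rewrite (leq_trans (max_card _)) ?card_ord.
case ct: (c true); case cf: (c false).
- have -> : [set i | [ffun i => c (t i)] i] = [set: 'I_q]%SET.
    by apply/setP=> i; rewrite !inE ffunE; case: (t i).
  by rewrite cardsT card_ord; lia.
- have -> : [set i | [ffun i => c (t i)] i] = [set i | t i].
    by apply/setP=> i; rewrite !inE ffunE; case: (t i).
  done.
- have -> : [set i | [ffun i => c (t i)] i] = ~: [set i | t i].
    by apply/setP=> i; rewrite !inE ffunE; case: (t i).
  have := cardsC [set i | t i]; rewrite card_ord; lia.
- have -> : [set i | [ffun i => c (t i)] i] = finset.set0.
    by apply/setP=> i; rewrite !inE ffunE; case: (t i).
  by rewrite cards0; lia.
Qed.

Definition flip n (i : 'I_n) (z : {ffun 'I_n -> bool}) : {ffun 'I_n -> bool} :=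
  [ffun l => if l == i then ~~ z l else z l].

Lemma exists_flip_sensitive n (F : {ffun 'I_n -> bool} -> bool) x y :
  F x != F y -> exists z i, F z != F (flip i z).
Proof.
move: {2}#|[set l | x l != y l]| (erefl #|[set l | x l != y l]|) => d.
elim: d x => [|d IH] x dxy Fxy.
  suff xy : x = y by rewrite xy eqxx in Fxy.
  apply/ffunP=> l; apply/eqP/negPn.
  by have := cards0_eq dxy; move/setP/(_ l); rewrite !inE => ->.
have [l xyl] : exists l, l \in [set l | x l != y l].
  by apply/set0Pn; rewrite -card_gt0 dxy.
case: (boolP (F x == F (flip l x))) => [/eqP Fx|]; last by exists x, l.
apply: (IH (flip l x)); last by rewrite -Fx.
have -> : [set l' | flip l x l' != y l'] = [set l | x l != y l] :\ l.
  apply/setP => l'; rewrite !inE ffunE.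
  case: (l' =P l) => [->|_] //=.
  by move: xyl; rewrite inE; case: (x l); case: (y l).
by move: dxy; rewrite (cardsD1 l) xyl add1n => -[].
Qed.

Lemma odflt_total_inj n (f : ppfun n) : (forall x, f x <> None) ->
  forall x y, odflt false (f x) = odflt false (f y) -> f x = f y.
Proof.
by move=> ft x y; move: (ft x) (ft y); case: (f x); case: (f y) => // a b _ _ /= ->.
Qed.

Lemma total_preserves_rho n (f : ppfun n) :
  (forall x, f x <> None) -> preserves rho f ->
  forall r1 r2 r3 r4 : {ffun 'I_n -> bool},
    (forall l, r1 l = r2 l \/ r3 l = r4 l) -> f r1 = f r2 \/ f r3 = f r4.
Proof.
move=> ft Rf r1 r2 r3 r4 r1234.
pose M (i : 'I_4) := match nat_of_ord i with 0 => r1 | 1 => r2 | 2 => r3 | _ => r4 end.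
have := Rf M; rewrite /rho !ffunE /M !inordK //.
case=> [j|i|/odflt_total_inj E|/odflt_total_inj E].
- by rewrite /rho !ffunE !inordK.
- exact: ft.
- by left; apply: E.
- by right; apply: E.
Qed.

(* If flipping coordinate i changes f at z, then for a i = b i every column of
   (a, b, z, flip i z) is in ρ, and ρ-preservation forces f a = f b. *)
Lemma total_preserves_rho_essentially_unary k (f : ppfun k.+1) :
  (forall x, f x <> None) -> preserves rho f ->
  exists i : 'I_k.+1, forall x y : {ffun 'I_k.+1 -> bool}, x i = y i -> f x = f y.
Proof.
move=> ft Rf.
have fE := odflt_total_inj ft.
pose F x := odflt false (f x).
case: (boolP [exists x, exists y, F x != F y]).
- move=> /existsP[x /existsP[y /(exists_flip_sensitive (F := F))[z [i fz]]]].
  exists i => a b abi.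
  have [] := total_preserves_rho ft Rf (r1 := a) (r2 := b) (r3 := z) (r4 := flip i z).
  + by move=> l; rewrite ffunE; case: (l =P i) => [->|_]; [left|right].
  + by [].
  + by move=> fzi; rewrite /F fzi eqxx in fz.
- move=> /existsPn fconst; exists ord0 => x y _; apply: fE.
  by move: (fconst x) => /existsPn /(_ y) /negPn /eqP.
Qed.

Lemma essentially_unary_Omega1 k (f : ppfun k.+1) (i : 'I_k.+1) :
  (forall x, f x <> None) ->
  (forall x y : {ffun 'I_k.+1 -> bool}, x i = y i -> f x = f y) ->
  Omega1 (mkpf f).
Proof.
move=> ft fi C [[Cproj Ccomp] _] Cunary.
pose u : ppfun 1 := [ffun v : {ffun 'I_1 -> bool} => f [ffun _ => v ord0]].
have -> : f = Defs.comp u (fun _ => Defs.proj i).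
  apply/ffunP => x; rewrite [RHS]ffunE.
  case: ifP => [_|/negP[]]; last by apply/forallP => j; rewrite ffunE.
  by rewrite ffunE; apply: fi; rewrite !ffunE.
apply: Ccomp => [|j]; last exact: Cproj.
by apply: Cunary; split => // v; rewrite ffunE; exact: ft.
Qed.

Lemma exists_ord_notin M (s : seq 'I_M) : size s < M -> exists y, y \notin s.
Proof.
move=> sM; apply/existsP; apply: contraLR sM => /existsPn sT; rewrite -leqNgt.
rewrite -{1}(card_ord M) (leq_trans _ (card_size s)) //.
by apply/subset_leq_card/fintype.subsetP => y _; have := sT y; rewrite negbK.
Qed.

Lemma leq_sum_pair M (B : 'I_M -> nat) x y : x != y -> B x + B y <= \sum_i B i.
Proof.
move=> xy; rewrite (bigD1 x) //= (bigD1 y) /=; last by rewrite eq_sym.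
by rewrite addnA leq_addr.
Qed.

Lemma leq_sum_triple M (B : 'I_M -> nat) x y z :
  x != y -> x != z -> y != z -> B x + B y + B z <= \sum_i B i.
Proof.
move=> xy xz yz; rewrite (bigD1 x) //= (bigD1 y) /=; last by rewrite eq_sym.
rewrite (bigD1 z) /=; last by rewrite eq_sym xz eq_sym yz.
by rewrite !addnA leq_addr.
Qed.

(* [B a] counts the rows of a matrix of stars equal to the star of [a]: sums of
   two fibers are column weights, the sum of three fibers is the output weight
   of g_M. *)
Section SigmaWeights.

Variables (M q : nat) (B : 'I_M -> nat).
Hypotheses (M_ge5 : 5 <= M) (sum_B : \sum_i B i = q).
Hypothesis sigma_pairs : forall a b, a != b -> sigma_weight q (B a + B b).

(* If every fiber is nonempty, a pair sum q - 2 or q leaves at most 2 for the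
   remaining M - 2 >= 3 fibers; so all pair sums are 2 and q = M. *)
Lemma sigma_pairs_has_zero : q != M -> exists a, B a = 0.
Proof.
move=> qM; case: (boolP [exists a, B a == 0]) => [/existsP[a /eqP]|/existsPn B_pos].
  by exists a.
have {}B_pos a : 1 <= B a by rewrite lt0n B_pos.
have sum_excess : \sum_i B i = \sum_i (B i - 1) + \sum_(i < M) 1.
  by rewrite -big_split /=; apply: eq_bigr => i _; rewrite subnK.
rewrite sum1_card card_ord in sum_excess.
have B1 a : B a = 1.
  have [b] : exists b, b \notin [:: a] by apply: exists_ord_notin => /=; lia.
  rewrite inE => ba; have := leq_sum_pair (fun i => B i - 1) ba.
  have := sigma_pairs ba; have := B_pos a; have := B_pos b; rewrite /sigma_weight; lia.
by move: qM; rewrite -sum_B (eq_bigr (fun=> 1)) // sum1_card card_ord eqxx.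
Qed.

Lemma sigma_triples : 7 <= q -> q != M ->
  forall x y z, x != y -> x != z -> y != z -> sigma_weight q (B x + B y + B z).
Proof.
move=> q_ge7 qM x y z xy xz yz.
have [a0 Ba0] := sigma_pairs_has_zero qM.
have sigma_B b : sigma_weight q (B b).
  have [->|ba0] := eqVneq b a0; first by rewrite Ba0; left.
  by have := sigma_pairs ba0; rewrite Ba0 addn0.
have := leq_sum_triple B xy xz yz; rewrite sum_B.
have := sigma_pairs xy; have := sigma_pairs xz; have := sigma_pairs yz.
rewrite /sigma_weight.
by case: (sigma_B x) => [|[|[|]]] ->; case: (sigma_B y) => [|[|[|]]] ->;
  case: (sigma_B z) => [|[|[|]]] ->; lia.
Qed.

End SigmaWeights.

Lemma cards_orb q (P Q : pred 'I_q) : (forall i, ~~ (P i && Q i)) ->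
  #|[set i | P i || Q i]| = #|[set i | P i]| + #|[set i | Q i]|.
Proof.
move=> PQ; have -> : [set i | P i || Q i] = [set i | P i] :|: [set i | Q i].
  by apply/setP=> i; rewrite !inE.
rewrite cardsU; have -> : [set i | P i] :&: [set i | Q i] = finset.set0.
  by apply/setP=> i; rewrite !inE; apply/negbTE/PQ.
by rewrite cards0 subn0.
Qed.

Lemma cards_pred1 q (a : 'I_q) : #|[set i | i == a]| = 1.
Proof. by rewrite -(cards1 a); apply: eq_card => i; rewrite !inE. Qed.

Lemma eq_both_neq (T : eqType) (x a b : T) : a != b -> ~~ ((x == a) && (x == b)).
Proof. by move=> ab; apply/negP => /andP[/eqP xa /eqP xb]; rewrite -xa -xb eqxx in ab. Qed.

Lemma eq_or3_neq (T : eqType) (x a b c : T) : a != b -> a != c ->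
  ~~ ((x == a) && ((x == b) || (x == c))).
Proof.
move=> ab ac; apply/negP => /andP[/eqP xa /orP[] /eqP xbc].
  by rewrite -xa -xbc eqxx in ab.
by rewrite -xa -xbc eqxx in ac.
Qed.

Local Ltac rewrite_diseqs := repeat match goal with
 | h : is_true (?u != ?v) |- context [?u == ?v] => rewrite (negbTE h)
 | h : is_true (?u != ?v) |- context [?v == ?u] => rewrite [v == u]eq_sym (negbTE h)
end.

Lemma exists_separating_pair (T : eqType) (x1 x2 x3 x4 y : T) :
  y \notin [:: x1; x2; x3; x4] -> x1 != x2 -> x3 != x4 ->
  exists a b, [/\ a != b, ((x1 == a) || (x1 == b)) != ((x2 == a) || (x2 == b))
                & ((x3 == a) || (x3 == b)) != ((x4 == a) || (x4 == b))].
Proof.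
rewrite !inE !negb_or => /and4P[y1 y2 y3 y4] n12 n34.
have [e13|n13] := eqVneq x1 x3.
  by subst x3; exists x1, y; rewrite_diseqs; rewrite !eqxx /=; rewrite_diseqs.
have [e14|n14] := eqVneq x1 x4.
  by subst x4; exists x1, y; rewrite_diseqs; rewrite !eqxx /=; rewrite_diseqs.
have [e23|n23] := eqVneq x2 x3.
  by subst x3; exists x1, x4; rewrite_diseqs; rewrite !eqxx /=; rewrite_diseqs.
by exists x1, x3; rewrite_diseqs; rewrite !eqxx /=; rewrite_diseqs.
Qed.

Section StarFunction.

Variable m : nat.
Local Notation M := m.+1.
Local Notation N := (m.+1 * m.+1).

Lemma pair_index_subproof (a b : 'I_M) : a * M + b < N.
Proof. have := ltn_ord a; have := ltn_ord b; nia. Qed.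

(* Coordinates of the stars are indexed by ordered pairs of vertices. *)
Definition pair_index (a b : 'I_M) : 'I_N := Ordinal (pair_index_subproof a b).

Lemma pair_index_surj (j : 'I_N) : exists a b, j = pair_index a b.
Proof.
have ja : j %/ M < M by rewrite ltn_divLR.
have jb : j %% M < M by rewrite ltn_pmod.
by exists (Ordinal ja), (Ordinal jb); apply: val_inj; rewrite /= -divn_eq.
Qed.

Definition star (x : 'I_M) : {ffun 'I_N -> bool} :=
  [ffun c : 'I_N => (c %/ M != c %% M) &&
                    ((x == c %/ M :> nat) || (x == c %% M :> nat))].

Lemma star_pair_index x a b : star x (pair_index a b) = (a != b) && ((x == a) || (x == b)).
Proof.
by rewrite ffunE /= divnMDl // divn_small // addn0 modnMDl modn_small.
Qed.

Definition fiber_card h (phi : 'I_h -> 'I_M) (a : 'I_M) := #|[set i | phi i == a]|.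

Lemma cards_pair_fibers h (phi : 'I_h -> 'I_M) a b : a != b ->
  #|[set i | (phi i == a) || (phi i == b)]| = fiber_card phi a + fiber_card phi b.
Proof. by move=> ab; rewrite cards_orb // => i; apply: eq_both_neq. Qed.

Lemma sum_fiber_card h (phi : 'I_h -> 'I_M) : \sum_a fiber_card phi a = h.
Proof.
rewrite -[RHS]card_ord -sum1_card (partition_big phi xpredT) //=.
by apply: eq_bigr => a _; rewrite sum1dep_card.
Qed.

Hypothesis m_ge6 : 6 <= m.

Lemma ord012_neq :
  [/\ (inord 0 : 'I_M) != inord 1, (inord 0 : 'I_M) != inord 2 & (inord 1 : 'I_M) != inord 2].
Proof. by rewrite -!val_eqE /= !inordK //; lia. Qed.

Lemma cards_ltn3 h (phi : 'I_h -> 'I_M) : #|[set i | phi i < 3]| =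
  fiber_card phi (inord 0) + fiber_card phi (inord 1) + fiber_card phi (inord 2).
Proof.
have [n01 n02 n12] := ord012_neq.
have -> : [set i | phi i < 3] =
    [set i | (phi i == inord 0) || ((phi i == inord 1) || (phi i == inord 2))].
  by apply/setP=> i; rewrite !inE -!val_eqE /= !inordK //; lia.
rewrite cards_orb => [|i]; last exact: eq_or3_neq.
by rewrite cards_pair_fibers // addnA.
Qed.

Lemma star_inj : injective star.
Proof.
move=> x z /ffunP xz; apply/eqP/negPn/negP => nxz.
have [y] : exists y, y \notin [:: x; z] by apply: exists_ord_notin => /=; lia.
rewrite !inE negb_or => /andP[yx yz].
move: (xz (pair_index x y)); rewrite !star_pair_index eqxx eq_sym yx /=.
by rewrite eq_sym (negbTE nxz) eq_sym (negbTE yz).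
Qed.

Definition star_fun : ppfun N :=
  [ffun v => if pick [pred x | v == star x] is Some x then Some (x < 3) else None].

Lemma star_funE x : star_fun (star x) = Some (x < 3).
Proof.
rewrite ffunE; case: pickP => [y /= /eqP/star_inj -> //|/(_ x)].
by rewrite /= eqxx.
Qed.

Lemma star_fun_rows h (V : 'I_h -> {ffun 'I_N -> bool}) :
  (forall i, star_fun (V i) <> None) ->
  exists phi : 'I_h -> 'I_M, forall i, V i = star (phi i).
Proof.
move=> domV.
have starV i : exists x, V i == star x.
  by move: (domV i); rewrite ffunE; case: pickP => // x /= Vx _; exists x.
by exists (fun i => xchoose (starV i)) => i; apply/eqP/(xchooseP (starV i)).
Qed.

Lemma star_fun_preserves_sigma q : 7 <= q -> q != M -> preserves (sigma q) star_fun.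
Proof.
move=> q_ge7 qM V sigmaV domV.
have [phi Vphi] := star_fun_rows domV.
have sigma_pairs a b : a != b -> sigma_weight q (fiber_card phi a + fiber_card phi b).
  move=> ab; have := sigmaV (pair_index a b); rewrite /sigma -cards_pair_fibers //.
  have -> // : [set i | [ffun i => V i (pair_index a b)] i] =
               [set i | (phi i == a) || (phi i == b)].
  by apply/setP => i; rewrite !inE ffunE Vphi star_pair_index ab.
rewrite /sigma; have -> : [set i | [ffun i => odflt false (star_fun (V i))] i] =
                          [set i | phi i < 3].
  by apply/setP=> i; rewrite !inE ffunE Vphi star_funE.
have [n01 n02 n12] := ord012_neq.
by rewrite cards_ltn3; apply: (sigma_triples _ (sum_fiber_card phi)) => //; lia.
Qed.

Lemma star_fun_not_preserves_sigma : ~ preserves (sigma M) star_fun.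
Proof.
have sigma_columns j : sigma M [ffun i => star i j].
  have [a [b ->]] := pair_index_surj j; rewrite /sigma.
  have -> : [set i | [ffun i => star i (pair_index a b)] i] =
            [set i : 'I_M | (a != b) && ((id i == a) || (id i == b))].
    by apply/setP=> i; rewrite !inE ffunE star_pair_index.
  have [<-|ab] /= := eqVneq a b.
    by left; apply/eqP; rewrite cards_eq0; apply/eqP/setP => i; rewrite !inE.
  by rewrite cards_pair_fibers // /fiber_card !cards_pred1; right; left.
move/(_ star sigma_columns (fun i => ltac:(by rewrite star_funE))); rewrite /sigma.
have -> : [set i | [ffun i => odflt false (star_fun (star i))] i] = [set i : 'I_M | id i < 3].
  by apply/setP=> i; rewrite !inE ffunE star_funE.
by rewrite cards_ltn3 /fiber_card !cards_pred1 /sigma_weight; lia.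
Qed.

Lemma star_fun_preserves_rho : preserves rho star_fun.
Proof.
move=> V rhoV domV; have [phi Vphi] := star_fun_rows domV.
rewrite /rho !(@ffunE _ _ (fun i => odflt false (star_fun (V i)))) !Vphi !star_funE /=.
have rho_pairs a b : a != b ->
    ((phi (inord 0) == a) || (phi (inord 0) == b)) =
      ((phi (inord 1) == a) || (phi (inord 1) == b)) \/
    ((phi (inord 2) == a) || (phi (inord 2) == b)) =
      ((phi (inord 3) == a) || (phi (inord 3) == b)).
  by move=> ab; have := rhoV (pair_index a b); rewrite /rho !ffunE !Vphi !star_pair_index ab.
move: (phi (inord 0)) (phi (inord 1)) (phi (inord 2)) (phi (inord 3)) rho_pairs.
move=> x1 x2 x3 x4 rho_pairs.
have [->|h12] := eqVneq (x1 < 3) (x2 < 3); first by left.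
have [->|h34] := eqVneq (x3 < 3) (x4 < 3); first by right.
have n12 : x1 != x2 by apply: contraNneq h12 => ->.
have n34 : x3 != x4 by apply: contraNneq h34 => ->.
have [y] : exists y, y \notin [:: x1; x2; x3; x4] by apply: exists_ord_notin => /=; lia.
move=> /exists_separating_pair /(_ n12 n34) [a [b [ab sep12 sep34]]].
by case: (rho_pairs a b ab) => E; [rewrite E eqxx in sep12 | rewrite E eqxx in sep34].
Qed.

End StarFunction.

Definition star_pfun m : pfun := @mkpf (m + m * m.+1) (star_fun m).

Definition Pol_rho_sigma (S : set nat) : set pfun := fun F =>
  preserves rho (projT2 F) /\ forall p, S p -> preserves (sigma (7 + p)) (projT2 F).

Lemma Pol_rho_sigma_partial_clone S : partial_clone (Pol_rho_sigma S).
Proof.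
split=> [k i|m n f gs [rho_f sigma_f] Pgs]; first by split=> [|p _]; apply: preserves_proj.
split=> [|p Sp]; apply: preserves_comp => [|i].
- exact: rho_f.
- exact: (Pgs i).1.
- exact: sigma_f.
- exact: (Pgs i).2 p Sp.
Qed.

Lemma Pol_rho_sigma_strong S : strong_partial_clone (Pol_rho_sigma S).
Proof.
split=> [|k f g [rho_f sigma_f] gf]; first exact: Pol_rho_sigma_partial_clone.
split=> [|p Sp]; apply: preserves_restriction gf _; [exact: rho_f | exact: sigma_f].
Qed.

Lemma total_comp m n (f : ppfun n.+1) (gs : 'I_n.+1 -> ppfun m.+1) :
  Defs.total (mkpf f) -> (forall i, Defs.total (mkpf (gs i))) ->
  Defs.total (mkpf (Defs.comp f gs)).
Proof.
move=> ft gst x; rewrite /= ffunE; case: ifP => [_|/negP[]]; first exact: ft.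
by apply/forallP => i; apply/eqP; exact: gst.
Qed.

Lemma total_proj k (i : 'I_k.+1) : Defs.total (mkpf (Defs.proj i)).
Proof. by move=> x; rewrite /= ffunE. Qed.

Lemma Pol_rho_sigma_total S f : (Pol_rho_sigma S f /\ Defs.total f) <-> Omega1 f.
Proof.
case: f => k f; split.
  move=> [[/= rho_f _] ft]; have [i fi] := total_preserves_rho_essentially_unary ft rho_f.
  exact: essentially_unary_Omega1 ft fi.
move/(_ (fun F => Pol_rho_sigma S F /\ Defs.total F)); apply; first split; first split.
- by move=> k' i; split; [exact: (Pol_rho_sigma_partial_clone S).1 | exact: total_proj].
- move=> m n f' gs [Pf ft] Pgs; split.
    by apply: (Pol_rho_sigma_partial_clone S).2 => // i; exact: (Pgs i).1.
  by apply: total_comp => // i; exact: (Pgs i).2.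
- by move=> F [].
move=> [k' u] [/= k'0 ut]; subst k'; split => //; split=> [|p _].
  exact: preserves_total_unary rho_unary_invariant ut.
exact: preserves_total_unary (@sigma_unary_invariant _) ut.
Qed.

Lemma Pol_rho_sigma_star_pfun S p : Pol_rho_sigma S (star_pfun (6 + p)) <-> ~ S p.
Proof.
split=> [[_ sigma_g] Sp|nSp].
  exact: (star_fun_not_preserves_sigma (leq_addr _ _)) (sigma_g p Sp).
split=> [|p' Sp']; first exact: (star_fun_preserves_rho (leq_addr _ _)).
have p'p : p' <> p by move=> E; rewrite E in Sp'.
by apply: (star_fun_preserves_sigma (leq_addr _ _)); lia.
Qed.

Lemma Pol_rho_sigma_inj : injective Pol_rho_sigma.
Proof.
move=> S T ST; apply/funext => p; apply/propext.
have := Pol_rho_sigma_star_pfun S p; rewrite ST Pol_rho_sigma_star_pfun.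
by case: (pselect (S p)); case: (pselect (T p)); tauto.
Qed.

Local Open Scope classical_set_scope.
Local Open Scope card_scope.

Lemma card_setT_le_inj T U (f : T -> U) (B : set U) :
  injective f -> (forall x, B (f x)) -> [set: T] #<= B.
Proof.
move=> finj fB; have := @inj_card_eq _ _ [set: T] f (in2W finj).
rewrite card_eq_le => /andP[_ Tf]; apply: card_le_trans Tf _.
by apply: subset_card_le => _ [x _ <-].
Qed.

Lemma image_pickle_inj (T : countType) : injective (fun A : set T => pickle @` A).
Proof.
have pickle_inj := pcan_inj (@pickleK T).
move=> A B /= AB; apply/funext => x.
by rewrite -[A x](image_inj pickle_inj) AB (image_inj pickle_inj).
Qed.

Theorem mainTheorem9 : I_str Omega1 #= [set: set nat].
Proof.
apply/card_eqPle; split.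
  apply: card_le_trans (card_leT _) _.
  exact: card_setT_le_inj (@image_pickle_inj pfun) _.
apply: card_setT_le_inj Pol_rho_sigma_inj _ => S.
by split; [exact: Pol_rho_sigma_strong | exact: Pol_rho_sigma_total].
Qed.
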